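(* Consider the Latex Particles Morphology Formation population balance system described in the context, with parameters $a \in \mathbb{R}$, $0<b<1$ and $v_0 = \lambda_{\mathrm{c}} > 0$. If $m(v,t)$, $w(v,t)$ are the solutions of this system, then $m(v,t) = w(v,t) = 0$ for all $v \in [0,v_0)$ and all $t \in \mathbb{R}^+$.
   Context: Fix real constants $a,b$ and positive constants $\lambda_{\mathrm{a}},\lambda_{\mathrm{c}},\lambda_{\mathrm{d}},\lambda_{\mathrm{m}},\lambda_{\mathrm{n}},\lambda_{\mathrm{p}},\lambda_{\mathrm{pol1}}$, $\bar\Psi>0$, $\Psi_r>0$, $\Phi_s\in(0,1)$. Set $v_0:=\lambda_{\mathrm{c}}$ and $\mu:=\lambda_{\mathrm{m}}$. The unknowns are densities $m(v,t), w(v,t)$ ($v,t\ge 0$) and scalar functions $V^{\mathrm{mat}}(t),V^{\mathrm{c_m}}(t),V^{\mathrm{c_w}}(t),\Psi(t),V_{\mathrm{pol2}}(t)$. Define $\alpha(v,u,t):=\tilde\alpha_0(t)[v^a+u^a]$, $\tilde\alpha_0(t):=\lambda_{\mathrm{a}}(\Psi(t)+1)^{14/3}$; $g(v,t):=\tilde\varrho_{\mathrm{d}}(t)v^b+\tilde\varrho_{\mathrm{p}}(t)v$, $\tilde\varrho_{\mathrm{p}}(t):=\lambda_{\mathrm{p}}\Psi(t)/V_p(t)$, $\tilde\varrho_{\mathrm{d}}(t):=\lambda_{\mathrm{d}}\Phi(t)(\Psi(t)+1)^{2/3}$; $n(v,t):=\tilde\eta_0(t)\delta(v-v_0)$ with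 $\tilde\eta_0(t):=\lambda_{\mathrm{n}}\Phi(t)$ and $\delta$ the Dirac delta; $\Phi(t):=\max\{V^{\mathrm{mat}}(t)/[(\Psi(t)+1)(V^{\mathrm{mat}}(t)+\lambda_{\mathrm{pol1}})]-\Phi_s,0\}$; $V_p(t):=(\Psi(t)+1)[V^{\mathrm{mat}}(t)+V^{\mathrm{c_m}}(t)+V^{\mathrm{c_w}}(t)+\lambda_{\mathrm{pol1}}]$; $\Sigma_y(t):=(\Psi(t)+1)^{2/3}\int_0^\infty v^b y(v,t)\,dv$ for $y=m,w$. The system is: for all $v,t>0$, $\partial_t m=-\partial_v(g m)+n-\mu m-m(v,t)\int_0^\infty\alpha(v,u,t)m(u,t)\,du+\tfrac12\int_0^v\alpha(v-u,u,t)m(v-u,t)m(u,t)\,du$, $\partial_t w=-\partial_v(g w)+\mu m-w(v,t)\int_0^\infty\alpha(v,u,t)w(u,t)\,du+\tfrac12\int_0^v\alpha(v-u,u,t)w(v-u,t)w(u,t)\,du$, with $m(v,0)=w(v,0)=0$, $m(0,t)=w(0,t)=0$; coupled to the ODEs $\dot V^{\mathrm{mat}}=\lambda_{\mathrm{p}}\frac{\Psi}{V_p}(V^{\mathrm{mat}}+\lambda_{\mathrm{pol1}})-\Phi[\lambda_{\mathrm{c}}\lambda_{\mathrm{n}}+\lambda_{\mathrm{d}}\Sigma_m+\lambda_{\mathrm{d}}\Sigma_w]$, $\dot V^{\mathrm{c_m}}=\lambda_{\mathrm{p}}\frac{\Psi}{V_p}V^{\mathrm{c_m}}+\Phi[\lambda_{\mathrm{c}}\lambda_{\mathrm{n}}+\lambda_{\mathrm{d}}\Sigma_m]-\lambda_{\mathrm{m}}V^{\mathrm{c_m}}$,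 $\dot V^{\mathrm{c_w}}=\lambda_{\mathrm{p}}\frac{\Psi}{V_p}V^{\mathrm{c_w}}+\lambda_{\mathrm{d}}\Phi\Sigma_w+\lambda_{\mathrm{m}}V^{\mathrm{c_m}}$, $\dot\Psi=-\lambda_{\mathrm{p}}\frac{\Psi}{\Psi+1}\frac{\Psi+\Psi_r}{V_{\mathrm{pol2}}+\lambda_{\mathrm{pol1}}}$, $\dot V_{\mathrm{pol2}}=\lambda_{\mathrm{p}}\frac{\Psi}{\Psi+1}$, with $V^{\mathrm{mat}}(0)=V^{\mathrm{c_m}}(0)=V^{\mathrm{c_w}}(0)=V_{\mathrm{pol2}}(0)=0$, $\Psi(0)=\bar\Psi$. Solutions $m,w$ are understood to be non-negative functions. *)

From Stdlib Require Import Reals.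
From Coquelicot Require Import Coquelicot.
Open Scope R_scope.

(* x ^ y for real exponent; x > 0 is the only case that matters; we set
   rpow x y := 0 for x <= 0 (so that 0^b = 0 for b > 0). *)
Definition rpow (x y : R) : R := if Rlt_dec 0 x then Rpower x y else 0.

Record LPMF_params := {
  p_a : R; p_b : R;
  lam_a : R; lam_c : R; lam_d : R; lam_m : R; lam_n : R; lam_p : R;
  lam_pol1 : R; Psi_bar : R; Psi_r : R; Phi_s : R }.

Definition params_ok (p : LPMF_params) : Prop :=
  0 < lam_a p /\ 0 < lam_c p /\ 0 < lam_d p /\ 0 < lam_m p /\ 0 < lam_n p /\
  0 < lam_p p /\ 0 < lam_pol1 p /\ 0 < Psi_bar p /\ 0 < Psi_r p /\
  0 < Phi_s p < 1.

Section Model.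
Variable p : LPMF_params.
Variables Vmat Vcm Vcw Psi Vpol2 : R -> R.

Definition v0 : R := lam_c p.
Definition mu : R := lam_m p.

Definition Phi (t : R) : R :=
  Rmax (Vmat t / ((Psi t + 1) * (Vmat t + lam_pol1 p)) - Phi_s p) 0.

Definition Vp (t : R) : R :=
  (Psi t + 1) * (Vmat t + Vcm t + Vcw t + lam_pol1 p).

Definition alpha0 (t : R) : R := lam_a p * rpow (Psi t + 1) (14/3).
Definition alpha (v u t : R) : R := alpha0 t * (rpow v (p_a p) + rpow u (p_a p)).

Definition rho_p (t : R) : R := lam_p p * Psi t / Vp t.
Definition rho_d (t : R) : R := lam_d p * Phi t * rpow (Psi t + 1) (2/3).
Definition growth (v t : R) : R := rho_d t * rpow v (p_b p) + rho_p t * v.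

Definition eta0 (t : R) : R := lam_n p * Phi t.

Definition Sigma_integrand (y : R -> R -> R) (t : R) : R -> R :=
  fun v => rpow v (p_b p) * y v t.
Definition Sigma (y : R -> R -> R) (t : R) : R :=
  rpow (Psi t + 1) (2/3) *
  RInt_gen (Sigma_integrand y t) (at_point 0) (Rbar_locally p_infty).

Definition loss_integrand (y : R -> R -> R) (v t : R) : R -> R :=
  fun u => alpha v u t * y u t.
Definition loss (y : R -> R -> R) (v t : R) : R :=
  y v t * RInt_gen (loss_integrand y v t) (at_right 0) (Rbar_locally p_infty).

Definition gain_integrand (y : R -> R -> R) (v t : R) : R -> R :=
  fun u => alpha (v - u) u t * y (v - u) t * y u t.
Definition gain (y : R -> R -> R) (v t : R) : R :=
  / 2 * RInt_gen (gain_integrand y v t) (at_right 0) (at_left v).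

Definition flux (y : R -> R -> R) (t : R) : R -> R := fun v => growth v t * y v t.

End Model.

Definition cont_quadrant_off (v0' : R) (f : R -> R -> R) : Prop :=
  forall v t, 0 <= v -> 0 <= t -> v <> v0' ->
  forall eps : posreal, exists delta : posreal, forall v' t',
    0 <= v' -> 0 <= t' -> Rabs (v' - v) < delta -> Rabs (t' - t) < delta ->
    Rabs (f v' t' - f v t) < eps.

(* The nucleation term n(v,t) = eta0(t) delta(v - v0) vanishes for v <> v0,
   so the PDEs are required to hold pointwise for all v, t > 0 with v <> v0. *)
Definition LPMF_solution (p : LPMF_params) (m w : R -> R -> R)
    (Vmat Vcm Vcw Psi Vpol2 : R -> R) : Prop :=
  let g := growth p Vmat Vcm Vcw Psi in
  let Sg := Sigma p Psi in
  let Phi_ := Phi p Vmat Psi in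
  let Vp_ := Vp p Vmat Vcm Vcw Psi in
  (forall v t, 0 <= v -> 0 <= t -> 0 <= m v t /\ 0 <= w v t) /\
  cont_quadrant_off (v0 p) m /\ cont_quadrant_off (v0 p) w /\
  (forall v, 0 <= v -> m v 0 = 0 /\ w v 0 = 0) /\
  (forall t, 0 <= t -> m 0 t = 0 /\ w 0 t = 0) /\
  (forall v t, 0 < v -> 0 < t -> v <> v0 p ->
     ex_derive (fun s => m v s) t /\ ex_derive (fun s => w v s) t /\
     ex_derive (flux p Vmat Vcm Vcw Psi m t) v /\
     ex_derive (flux p Vmat Vcm Vcw Psi w t) v /\
     ex_RInt_gen (loss_integrand p Psi m v t) (at_right 0) (Rbar_locally p_infty) /\
     ex_RInt_gen (loss_integrand p Psi w v t) (at_right 0) (Rbar_locally p_infty) /\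
     ex_RInt_gen (gain_integrand p Psi m v t) (at_right 0) (at_left v) /\
     ex_RInt_gen (gain_integrand p Psi w v t) (at_right 0) (at_left v) /\
     Derive (fun s => m v s) t =
       - Derive (flux p Vmat Vcm Vcw Psi m t) v - mu p * m v t
       - loss p Psi m v t + gain p Psi m v t /\
     Derive (fun s => w v s) t =
       - Derive (flux p Vmat Vcm Vcw Psi w t) v + mu p * m v t
       - loss p Psi w v t + gain p Psi w v t) /\
  (forall t, 0 <= t ->
     ex_RInt_gen (Sigma_integrand p m t) (at_point 0) (Rbar_locally p_infty) /\
     ex_RInt_gen (Sigma_integrand p w t) (at_point 0) (Rbar_locally p_infty)) /\
  Vmat 0 = 0 /\ Vcm 0 = 0 /\ Vcw 0 = 0 /\ Vpol2 0 = 0 /\ Psi 0 = Psi_bar p /\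
  filterlim Vmat (at_right 0) (locally (Vmat 0)) /\
  filterlim Vcm (at_right 0) (locally (Vcm 0)) /\
  filterlim Vcw (at_right 0) (locally (Vcw 0)) /\
  filterlim Psi (at_right 0) (locally (Psi 0)) /\
  filterlim Vpol2 (at_right 0) (locally (Vpol2 0)) /\
  (forall t, 0 < t ->
     is_derive Vmat t
       (lam_p p * Psi t / Vp_ t * (Vmat t + lam_pol1 p)
        - Phi_ t * (lam_c p * lam_n p + lam_d p * Sg m t + lam_d p * Sg w t)) /\
     is_derive Vcm t
       (lam_p p * Psi t / Vp_ t * Vcm t
        + Phi_ t * (lam_c p * lam_n p + lam_d p * Sg m t) - lam_m p * Vcm t) /\
     is_derive Vcw t
       (lam_p p * Psi t / Vp_ t * Vcw t + lam_d p * Phi_ t * Sg w t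
        + lam_m p * Vcm t) /\
     is_derive Psi t
       (- lam_p p * (Psi t / (Psi t + 1)) * ((Psi t + Psi_r p) / (Vpol2 t + lam_pol1 p))) /\
     is_derive Vpol2 t (lam_p p * (Psi t / (Psi t + 1)))).

From Stdlib Require Import Reals Lra Classical ClassicalEpsilon.
From Coquelicot Require Import Coquelicot.
Open Scope R_scope.

(* For v < v0 the nucleation term vanishes, so on [0, V] x [0, oo), V < v0, both m and w are
   subsolutions of a source-free transport-coagulation equation: for m the removal term -mu m
   has a sign, for w the source mu m vanishes once m = 0 there.  A maximum principle forces
   such a subsolution with zero initial and boundary data to vanish.  If the running maximum
   M(t) = max_{v <= V} y(v,t) became positive at t1, maximise M(t) - eps t over [0, t1]; at
   the maximiser (vs, ts) the time derivative is at least eps, whereas the transport term is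
   nonpositive because the growth rate g and y both increase towards vs, and the gain is at
   most the loss because y(vs - u) <= y(vs).  Monotonicity of g in v needs rho_p >= 0, that
   is Psi > 0 (Psi e^{Kt} is nondecreasing as long as Psi > 0) and a positive total volume
   V^mat + V^c_m + V^c_w + lambda_pol1, which is nondecreasing. *)

Lemma rpow_ge0 x y : 0 <= rpow x y.
Proof.
  unfold rpow; destruct (Rlt_dec 0 x); [left; apply exp_pos | lra].
Qed.

Lemma rpow_le_compat x y b : 0 < b -> 0 <= x <= y -> rpow x b <= rpow y b.
Proof.
  intros hb [hx hxy]; unfold rpow.
  destruct (Rlt_dec 0 x), (Rlt_dec 0 y); try lra.
  - apply Rle_Rpower_l; lra.
  - left; apply exp_pos.
Qed.

Lemma continuous_rpow_l b x : 0 < x -> continuous (fun u => rpow u b) x.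
Proof.
  intros hx.
  apply continuous_ext_loc with (fun u => Rpower u b).
  - exists (mkposreal x hx); intros u hu; change (Rabs (u - x) < x) in hu.
    apply Rabs_lt_between in hu.
    unfold rpow; destruct (Rlt_dec 0 u); [reflexivity | lra].
  - apply (ex_derive_continuous (K := R_AbsRing) (V := R_NormedModule)).
    exists (b * Rpower x (b - 1)).
    apply is_derive_Reals, derivable_pt_lim_power, hx.
Qed.

Lemma at_right_of_interval a b (P : R -> Prop) :
  a < b -> (forall x, a < x < b -> P x) -> at_right a P.
Proof.
  intros hab hP; exists (mkposreal (b - a) ltac:(lra)); intros x hx hax.
  change (Rabs (x - a) < b - a) in hx; apply Rabs_lt_between in hx; apply hP; lra.
Qed.

Lemma at_left_of_interval a b (P : R -> Prop) :
  a < b -> (forall x, a < x < b -> P x) -> at_left b P.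
Proof.
  intros hab hP; exists (mkposreal (b - a) ltac:(lra)); intros x hx hxb.
  change (Rabs (x - b) < b - a) in hx; apply Rabs_lt_between in hx; apply hP; lra.
Qed.

Lemma filterlim_at_right_of_continuous (f : R -> R) x :
  continuous f x -> filterlim f (at_right x) (locally (f x)).
Proof. apply filterlim_filter_le_1, filter_le_within. Qed.

Lemma filterlim_at_left_of_continuous (f : R -> R) x :
  continuous f x -> filterlim f (at_left x) (locally (f x)).
Proof. apply filterlim_filter_le_1, filter_le_within. Qed.

Lemma nondecreasing_of_derive_nonneg (f df : R -> R) a b :
  (forall x, a < x < b -> is_derive f x (df x)) ->
  (forall x, a < x < b -> 0 <= df x) ->
  forall x y, a < x -> x <= y -> y < b -> f x <= f y.
Proof.
  intros hd hdf x y hx [hxy | <-] hy; [| lra].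
  destruct (MVT_cor2 f df x y hxy) as [c [hfc hc]].
  { intros c hc; apply is_derive_Reals, hd; lra. }
  assert (0 <= df c * (y - x)) by (apply Rmult_le_pos; [apply hdf | ]; lra).
  lra.
Qed.

Lemma ge_init_of_derive_nonneg (f df : R -> R) a b :
  filterlim f (at_right a) (locally (f a)) ->
  (forall x, a < x < b -> is_derive f x (df x)) ->
  (forall x, a < x < b -> 0 <= df x) ->
  forall x, a <= x < b -> f a <= f x.
Proof.
  intros hf hd hdf x [[hax | hax] hxb]; [| rewrite hax; lra].
  apply (closed_filterlim_loc f (fun z => z <= f x) (f a) hf); [| apply closed_le].
  apply (at_right_of_interval a x); [lra | intros z hz].
  apply (nondecreasing_of_derive_nonneg f df a b); auto; lra.
Qed.

Lemma le_init_of_derive_nonpos (f df : R -> R) a b :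
  filterlim f (at_right a) (locally (f a)) ->
  (forall x, a < x < b -> is_derive f x (df x)) ->
  (forall x, a < x < b -> df x <= 0) ->
  forall x, a <= x < b -> f x <= f a.
Proof.
  intros hf hd hdf x hx.
  enough (- f a <= - f x) by lra.
  apply (ge_init_of_derive_nonneg (fun z => - f z) (fun z => - df z) a b); auto.
  - exact (filterlim_comp _ _ _ f _ _ _ _ hf (filterlim_opp (K := R_AbsRing) (f a))).
  - intros z hz; apply (is_derive_opp f), hd, hz.
  - intros z hz; specialize (hdf z hz); lra.
Qed.

Lemma exp_weighted_ge_init (f df : R -> R) K b :
  filterlim f (at_right 0) (locally (f 0)) ->
  (forall x, 0 < x < b -> is_derive f x (df x)) ->
  (forall x, 0 < x < b -> - K * f x <= df x) ->
  forall x, 0 <= x < b -> f 0 <= f x * exp (K * x).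
Proof.
  intros hf hd hdf x hx.
  replace (f 0) with (f 0 * exp (K * 0)) by (rewrite Rmult_0_r, exp_0; ring).
  apply (ge_init_of_derive_nonneg (fun z => f z * exp (K * z))
           (fun z => (df z + K * f z) * exp (K * z)) 0 b); auto.
  - eapply filterlim_comp_2; [exact hf | | apply (filterlim_mult (K := R_AbsRing))].
    apply (filterlim_at_right_of_continuous (fun z => exp (K * z))), continuous_exp_comp.
    apply (continuous_mult (K := R_AbsRing)); [apply continuous_const | apply continuous_id].
  - intros z hz.
    apply (is_derive_ext (fun u => f u * exp (K * u))); [reflexivity |].
    replace ((df z + K * f z) * exp (K * z))
      with (df z * exp (K * z) + f z * (K * exp (K * z))) by ring.
    apply (is_derive_mult f (fun u => exp (K * u))); [apply hd, hz | | intros; apply Rmult_comm].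
    auto_derive; [exact I | ring].
  - intros z hz; apply Rmult_le_pos; [specialize (hdf z hz); lra | left; apply exp_pos].
Qed.

Lemma is_derive_nonneg_of_left_max (f : R -> R) x d l :
  0 < d -> is_derive f x l -> (forall s, x - d < s < x -> f s <= f x) -> 0 <= l.
Proof.
  intros hd hfl hmax; apply is_derive_Reals in hfl.
  apply Rnot_lt_le; intros hl.
  destruct (hfl (- l) ltac:(lra)) as [del hdel].
  set (h := - Rmin del d / 2).
  assert (0 < Rmin del d) by (apply Rmin_pos; [apply cond_pos | lra]).
  assert (Rmin del d <= d) by apply Rmin_r.
  assert (Rmin del d <= del) by apply Rmin_l.
  specialize (hdel h ltac:(unfold h; lra) ltac:(unfold h; rewrite Rabs_left; lra)).
  specialize (hmax (x + h) ltac:(unfold h; lra)).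
  assert (0 <= (f (x + h) - f x) / h).
  { replace ((f (x + h) - f x) / h) with ((f x - f (x + h)) / - h)
      by (field; unfold h; lra).
    apply Rdiv_le_0_compat; unfold h in *; lra. }
  apply Rabs_lt_between in hdel; lra.
Qed.

Lemma filterlim_Rplus {F : (R -> Prop) -> Prop} {FF : Filter F} (f g : R -> R) a b :
  filterlim f F (locally a) -> filterlim g F (locally b) ->
  filterlim (fun x => f x + g x) F (locally (a + b)).
Proof.
  intros hf hg; exact (filterlim_comp_2 f g Rplus hf hg (filterlim_plus (K := R_AbsRing) a b)).
Qed.

Lemma is_derive_Rplus (f g : R -> R) x df dg :
  is_derive f x df -> is_derive g x dg -> is_derive (fun u => f u + g u) x (df + dg).
Proof. exact (is_derive_plus f g x df dg). Qed.

Lemma continuous_Rmult (f g : R -> R) x :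
  continuous f x -> continuous g x -> continuous (fun u => f u * g u) x.
Proof. apply (continuous_mult (K := R_AbsRing)). Qed.

Lemma continuous_reflect (f : R -> R) v x :
  continuous f (v - x) -> continuous (fun u => f (v - u)) x.
Proof.
  apply (continuous_comp (fun u => v - u) f).
  apply (continuous_minus (K := R_AbsRing) (V := R_NormedModule));
    [apply continuous_const | apply continuous_id].
Qed.

Lemma continuous_induction_pos (f : R -> R) :
  0 < f 0 ->
  (forall t, 0 <= t -> filterlim f (at_right t) (locally (f t))) ->
  (forall T, 0 < T -> (forall s, 0 <= s < T -> 0 < f s) -> 0 < f T) ->
  forall t, 0 <= t -> 0 < f t.
Proof.
  intros hf0 hrc hstep t1 ht1; apply Rnot_le_lt; intros hneg.
  set (E := fun s => 0 <= s <= t1 /\ forall r, 0 <= r <= s -> 0 < f r).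
  assert (hE0 : E 0) by (split; [lra | intros r hr; replace r with 0 by lra; exact hf0]).
  destruct (completeness E) as [ts [hub hlub]].
  { exists t1; intros s [hs _]; lra. }
  { exists 0; exact hE0. }
  assert (hts0 : 0 <= ts) by (apply hub, hE0).
  assert (hts1 : ts <= t1) by (apply hlub; intros s [hs _]; lra).
  assert (hbelow : forall r, 0 <= r < ts -> 0 < f r).
  { intros r hr; apply NNPP; intros hn.
    enough (ts <= r) by lra.
    apply hlub; intros s [_ hs]; apply Rnot_lt_le; intros hrs; apply hn, hs; lra. }
  assert (hfts : 0 < f ts).
  { destruct hts0 as [hts | hts]; [apply hstep; auto | rewrite <- hts; exact hf0]. }
  destruct (hrc ts hts0 (fun z => 0 < z)) as [d hd].
  { exists (mkposreal (f ts) hfts); intros z hz.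
    change (Rabs (z - f ts) < f ts) in hz; apply Rabs_lt_between in hz; lra. }
  destruct (Rle_lt_or_eq_dec ts t1 hts1) as [hlt | heq]; [| rewrite heq in hfts; lra].
  set (s := Rmin (ts + d / 2) t1).
  assert (s <= ts + d / 2) by apply Rmin_l.
  assert (s <= t1) by apply Rmin_r.
  assert (ts < s) by (apply Rmin_glb_lt; [assert (0 < d) by apply cond_pos |]; lra).
  enough (s <= ts) by lra.
  apply hub; split; [lra |].
  intros r hr; destruct (Rlt_or_le r ts); [apply hbelow; lra |].
  destruct (Rle_lt_or_eq_dec ts r) as [htr | htr]; [lra | | rewrite <- htr; exact hfts].
  apply hd; [| exact htr].
  change (Rabs (r - ts) < d); rewrite Rabs_right; lra.
Qed.

Section PsiPositivity.

Variables (lp pol1 Pr Pb : R) (Psi Vpol2 : R -> R).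
Hypotheses (hlp : 0 < lp) (hpol : 0 < pol1) (hPr : 0 < Pr) (hPb : 0 < Pb)
  (hPsi0 : Psi 0 = Pb) (hV0 : Vpol2 0 = 0)
  (hPsi_rc : filterlim Psi (at_right 0) (locally (Psi 0)))
  (hV_rc : filterlim Vpol2 (at_right 0) (locally (Vpol2 0)))
  (hdPsi : forall t, 0 < t -> is_derive Psi t
     (- lp * (Psi t / (Psi t + 1)) * ((Psi t + Pr) / (Vpol2 t + pol1))))
  (hdV : forall t, 0 < t -> is_derive Vpol2 t (lp * (Psi t / (Psi t + 1)))).

Lemma continuous_Psi t : 0 < t -> continuous Psi t.
Proof.
  intros ht; apply (ex_derive_continuous (K := R_AbsRing) (V := R_NormedModule)).
  eexists; apply hdPsi, ht.
Qed.

Let rate s := lp * (Psi s / (Psi s + 1)) * ((Psi s + Pr) / (Vpol2 s + pol1)).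
Let K := lp * (Pb + Pr) / pol1.

Lemma is_derive_Psi_rate s : 0 < s -> is_derive Psi s (- rate s).
Proof.
  intros hs; replace (- rate s) with
    (- lp * (Psi s / (Psi s + 1)) * ((Psi s + Pr) / (Vpol2 s + pol1))) by (unfold rate; ring).
  apply hdPsi, hs.
Qed.

Section WhilePositive.

Variable T : R.
Hypothesis hpos : forall s, 0 <= s < T -> 0 < Psi s.

Lemma Vpol2_nonneg s : 0 <= s < T -> 0 <= Vpol2 s.
Proof.
  intros hs; rewrite <- hV0.
  apply (ge_init_of_derive_nonneg Vpol2 (fun t => lp * (Psi t / (Psi t + 1))) 0 T); auto.
  - intros x hx; apply hdV; lra.
  - intros x hx; assert (0 < Psi x) by (apply hpos; lra).
    apply Rmult_le_pos; [lra | apply Rlt_le, Rdiv_lt_0_compat; lra].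
Qed.

Lemma Psi_rate_factors s : 0 < s < T ->
  0 < Psi s / (Psi s + 1) <= Psi s /\
  0 < (Psi s + Pr) / (Vpol2 s + pol1) <= (Psi s + Pr) / pol1.
Proof.
  intros hs.
  assert (0 < Psi s) by (apply hpos; lra).
  assert (0 <= Vpol2 s) by (apply Vpol2_nonneg; lra).
  split; split.
  - apply Rdiv_lt_0_compat; lra.
  - apply Rmult_le_reg_r with (Psi s + 1); [lra |].
    unfold Rdiv; rewrite Rmult_assoc, Rinv_l, Rmult_1_r by lra.
    assert (0 <= Psi s * Psi s) by (apply Rmult_le_pos; lra); lra.
  - apply Rdiv_lt_0_compat; lra.
  - apply Rmult_le_compat_l; [lra | apply Rinv_le_contravar; lra].
Qed.

Lemma Psi_le_init s : 0 <= s < T -> Psi s <= Pb.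
Proof.
  intros hs; rewrite <- hPsi0.
  apply (le_init_of_derive_nonpos Psi (fun t => - rate t) 0 T hPsi_rc); auto.
  - intros x hx; apply is_derive_Psi_rate; lra.
  - intros x hx; destruct (Psi_rate_factors x hx) as [[h1 _] [h2 _]].
    assert (0 < rate x) by (apply Rmult_lt_0_compat; [apply Rmult_lt_0_compat |]; lra).
    lra.
Qed.

Lemma Psi_rate_le s : 0 < s < T -> rate s <= K * Psi s.
Proof.
  intros hs; destruct (Psi_rate_factors s hs) as [[h1 h1'] [h2 h2']].
  assert (Psi s <= Pb) by (apply Psi_le_init; lra).
  assert ((Psi s + Pr) / pol1 <= (Pb + Pr) / pol1)
    by (apply Rmult_le_compat_r; [apply Rlt_le, Rinv_0_lt_compat |]; lra).
  replace (K * Psi s) with (lp * Psi s * ((Pb + Pr) / pol1)) by (unfold K; field; lra).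
  apply Rmult_le_compat; [apply Rmult_le_pos | | apply Rmult_le_compat_l |]; lra.
Qed.

Lemma Psi_lower_bound : 0 < T -> Pb * exp (- K * T) <= Psi T.
Proof.
  intros hT.
  assert (hK : 0 < K) by (unfold K; apply Rdiv_lt_0_compat; [apply Rmult_lt_0_compat |]; lra).
  assert (hgrowth : forall s, 0 <= s < T -> Pb <= Psi s * exp (K * s)).
  { intros s hs; rewrite <- hPsi0.
    apply (exp_weighted_ge_init Psi (fun t => - rate t) K T hPsi_rc); auto.
    - intros x hx; apply is_derive_Psi_rate; lra.
    - intros x hx; assert (h := Psi_rate_le x hx); lra. }
  assert (hPsi_lc : filterlim Psi (at_left T) (locally (Psi T)))
    by (apply (filterlim_at_left_of_continuous Psi T), continuous_Psi, hT).
  apply (closed_filterlim_loc Psi (fun z => Pb * exp (- K * T) <= z) (Psi T) hPsi_lc);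
    [| apply closed_ge].
  apply (at_left_of_interval 0 T); [exact hT | intros s hs].
  specialize (hgrowth s ltac:(lra)).
  apply Rle_trans with (Pb * exp (- K * s)).
  - apply Rmult_le_compat_l; [lra |].
    apply Rlt_le, exp_increasing.
    assert (K * s < K * T) by (apply Rmult_lt_compat_l; lra); lra.
  - replace (Psi s) with (Psi s * exp (K * s) * exp (- K * s))
      by (rewrite Rmult_assoc, <- exp_plus; replace (K * s + - K * s) with 0 by ring;
          rewrite exp_0; ring).
    apply Rmult_le_compat_r; [left; apply exp_pos | exact hgrowth].
Qed.

End WhilePositive.

Lemma Psi_pos t : 0 <= t -> 0 < Psi t.
Proof.
  apply continuous_induction_pos; [lra | |].
  - intros s [hs | <-]; [| exact hPsi_rc].
    apply filterlim_at_right_of_continuous, continuous_Psi, hs.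
  - intros T hT hpos; eapply Rlt_le_trans; [| apply (Psi_lower_bound T); auto].
    apply Rmult_lt_0_compat; [exact hPb | apply exp_pos].
Qed.

End PsiPositivity.

Lemma LPMF_Psi_pos p m w Vmat Vcm Vcw Psi Vpol2 :
  params_ok p -> LPMF_solution p m w Vmat Vcm Vcw Psi Vpol2 ->
  forall t, 0 <= t -> 0 < Psi t.
Proof.
  intros (_ & _ & _ & _ & _ & hlp & hpol & hPb & hPr & _) hsol.
  destruct hsol as (_ & _ & _ & _ & _ & _ & _ & _ & _ & _ & hV0 & hPsi0 & _ & _ & _ &
                    hPsi_rc & hV_rc & hode).
  apply (Psi_pos (lam_p p) (lam_pol1 p) (Psi_r p) (Psi_bar p) Psi Vpol2); auto;
    intros t ht; apply (hode t ht).
Qed.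

Lemma LPMF_total_volume_ge p m w Vmat Vcm Vcw Psi Vpol2 :
  params_ok p -> LPMF_solution p m w Vmat Vcm Vcw Psi Vpol2 ->
  forall t, 0 <= t -> lam_pol1 p <= Vmat t + Vcm t + Vcw t + lam_pol1 p.
Proof.
  intros hp hsol.
  assert (hPsi := LPMF_Psi_pos p m w Vmat Vcm Vcw Psi Vpol2 hp hsol).
  destruct hp as (_ & _ & _ & _ & _ & hlp & hpol & _).
  destruct hsol as (_ & _ & _ & _ & _ & _ & _ & hVm0 & hVcm0 & hVcw0 & _ & _ &
                    hVm_rc & hVcm_rc & hVcw_rc & _ & _ & hode).
  set (S := fun t => Vmat t + Vcm t + Vcw t + lam_pol1 p).
  assert (hS0 : S 0 = lam_pol1 p) by (unfold S; rewrite hVm0, hVcm0, hVcw0; ring).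
  assert (hS_rc : filterlim S (at_right 0) (locally (S 0))).
  { unfold S; repeat apply filterlim_Rplus; auto; apply filterlim_const. }
  (* the exchange terms cancel: S' = (lam_p Psi / Vp) S *)
  assert (hdS : forall t, 0 < t ->
    is_derive S t (lam_p p * Psi t / Vp p Vmat Vcm Vcw Psi t * S t)).
  { intros t ht; destruct (hode t ht) as (hdVm & hdVcm & hdVcw & _).
    assert (hsum := is_derive_Rplus _ (fun _ => lam_pol1 p) t _ _
      (is_derive_Rplus _ Vcw t _ _ (is_derive_Rplus Vmat Vcm t _ _ hdVm hdVcm) hdVcw)
      (is_derive_const (K := R_AbsRing) (V := R_NormedModule) (lam_pol1 p) t)).
    match type of hsum with is_derive _ _ ?d =>
      replace (lam_p p * Psi t / Vp p Vmat Vcm Vcw Psi t * S t) with d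
        by (unfold S, zero; simpl; ring) end.
    exact hsum. }
  intros t ht; fold (S t); rewrite <- hS0.
  apply (ge_init_of_derive_nonneg S (fun x => lam_p p * Psi x / Vp p Vmat Vcm Vcw Psi x * S x)
           0 (t + 1) hS_rc); [intros x hx; apply hdS; lra | | lra].
  intros x hx; unfold Vp; fold (S x).
  assert (0 < Psi x) by (apply hPsi; lra).
  destruct (Req_dec (S x) 0) as [h0 | h0]; [rewrite h0; lra |].
  replace (lam_p p * Psi x / ((Psi x + 1) * S x) * S x) with (lam_p p * Psi x / (Psi x + 1))
    by (field; lra).
  apply Rlt_le, Rdiv_lt_0_compat; [apply Rmult_lt_0_compat |]; lra.
Qed.

Lemma LPMF_growth_monotone p m w Vmat Vcm Vcw Psi Vpol2 :
  params_ok p -> 0 < p_b p -> LPMF_solution p m w Vmat Vcm Vcw Psi Vpol2 ->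
  forall t, 0 < t -> forall u v, 0 <= u <= v ->
  0 <= growth p Vmat Vcm Vcw Psi u t <= growth p Vmat Vcm Vcw Psi v t.
Proof.
  intros hp hb hsol t ht u v huv.
  assert (hPsi : 0 < Psi t) by (apply (LPMF_Psi_pos p m w Vmat Vcm Vcw Psi Vpol2); auto; lra).
  assert (hS := LPMF_total_volume_ge p m w Vmat Vcm Vcw Psi Vpol2 hp hsol t ltac:(lra)).
  destruct hp as (_ & _ & hld & _ & _ & hlp & hpol & _).
  assert (hrho_p : 0 <= rho_p p Vmat Vcm Vcw Psi t).
  { unfold rho_p, Vp; apply Rlt_le, Rdiv_lt_0_compat; apply Rmult_lt_0_compat; lra. }
  assert (hrho_d : 0 <= rho_d p Vmat Psi t).
  { unfold rho_d, Phi.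
    apply Rmult_le_pos; [apply Rmult_le_pos; [lra | apply Rmax_r] | apply rpow_ge0]. }
  unfold growth; split.
  - apply Rplus_le_le_0_compat; apply Rmult_le_pos; auto; [apply rpow_ge0 | lra].
  - apply Rplus_le_compat; apply Rmult_le_compat_l; auto; [apply rpow_le_compat |]; lra.
Qed.

Lemma is_RInt_gen_closed {Fa Fb : (R -> Prop) -> Prop}
    {FFa : ProperFilter Fa} {FFb : ProperFilter Fb} (f : R -> R) (D : R -> Prop) l :
  closed D -> is_RInt_gen f Fa Fb l ->
  filter_prod Fa Fb (fun ab => forall z, is_RInt f (fst ab) (snd ab) z -> D z) -> D l.
Proof.
  intros hD hl hev; apply hD; intros hnot.
  destruct (filter_ex _ (filter_and _ _ hev (hl _ hnot))) as [ab [hab [z [hz hnz]]]].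
  exact (hnz (hab z hz)).
Qed.

Lemma RInt_le_RInt_of_nonneg (f : R -> R) a b c d :
  c <= a -> a <= b -> b <= d -> ex_RInt f c d -> (forall x, c < x < d -> 0 <= f x) ->
  RInt f a b <= RInt f c d.
Proof.
  intros hca hab hbd hf hpos.
  assert (hcb : ex_RInt f c b) by (apply (ex_RInt_Chasles_1 f c b d); auto; lra).
  assert (hbd' : ex_RInt f b d) by (apply (ex_RInt_Chasles_2 f c b d); auto; lra).
  assert (hca' : ex_RInt f c a) by (apply (ex_RInt_Chasles_1 f c a b); auto; lra).
  assert (hab' : ex_RInt f a b) by (apply (ex_RInt_Chasles_2 f c a b); auto; lra).
  rewrite <- (RInt_Chasles f c b d hcb hbd'), <- (RInt_Chasles f c a b hca' hab').
  assert (0 <= RInt f c a) by (apply RInt_ge_0; auto; intros x hx; apply hpos; lra).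
  assert (0 <= RInt f b d) by (apply RInt_ge_0; auto; intros x hx; apply hpos; lra).
  unfold plus; simpl; lra.
Qed.

Lemma RInt_le_RInt_gen_pinfty (f : R -> R) x a b :
  x < a <= b -> (forall u, x < u -> 0 <= f u) ->
  ex_RInt_gen f (at_right x) (Rbar_locally p_infty) ->
  RInt f a b <= RInt_gen f (at_right x) (Rbar_locally p_infty).
Proof.
  intros hab hpos hf.
  apply (is_RInt_gen_closed f (fun z => RInt f a b <= z) _ (closed_ge _) (RInt_gen_correct f hf)).
  exists (fun c => x < c < a) (fun d => b < d);
    [apply (at_right_of_interval x a); [lra | auto] | exists b; auto |].
  intros c d hc hd z hz; simpl in hz.
  rewrite <- (is_RInt_unique _ _ _ _ hz).
  apply RInt_le_RInt_of_nonneg; try lra; [exists z; exact hz |].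
  intros u hu; apply hpos; lra.
Qed.

Lemma RInt_reflect (f : R -> R) v a b :
  ex_RInt f (v - a) (v - b) -> RInt (fun u => f (v - u)) a b = RInt f (v - b) (v - a).
Proof.
  intros hf.
  assert (hf' : ex_RInt f (-1 * a + v) (-1 * b + v))
    by (replace (-1 * a + v) with (v - a) by ring; replace (-1 * b + v) with (v - b) by ring;
        exact hf).
  assert (hlin := RInt_comp_lin f (-1) v a b hf').
  replace (-1 * a + v) with (v - a) in hlin by ring.
  replace (-1 * b + v) with (v - b) in hlin by ring.
  rewrite <- (opp_RInt_swap f (v - a) (v - b) hf), <- hlin, <- RInt_opp
    by exact (ex_RInt_comp_lin f (-1) v a b hf').
  apply RInt_ext; intros u _.
  unfold opp, scal; simpl; unfold mult; simpl.
  replace (-1 * u + v) with (v - u) by ring; ring.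
Qed.

Definition half_gain_integrand (p : LPMF_params) (Psi : R -> R) (y : R -> R -> R)
    (v t u : R) : R :=
  alpha0 p Psi t * rpow u (p_a p) * y u t * y (v - u) t.

Lemma gain_integrand_split p Psi y v t u :
  gain_integrand p Psi y v t u =
  half_gain_integrand p Psi y v t u + half_gain_integrand p Psi y v t (v - u).
Proof.
  unfold gain_integrand, half_gain_integrand, alpha.
  replace (v - (v - u)) with u by ring; ring.
Qed.

Section CoagulationAtMaximum.

Variables (p : LPMF_params) (Psi : R -> R) (y : R -> R -> R) (v t : R).
Hypotheses (hla : 0 <= lam_a p) (hv : 0 < v)
  (hy_nonneg : forall u, 0 <= u -> 0 <= y u t)
  (hy_cont : forall u, 0 < u <= v -> continuous (fun x => y x t) u)
  (hy_max : forall u, 0 <= u <= v -> y u t <= y v t).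

Lemma alpha0_ge0 : 0 <= alpha0 p Psi t.
Proof. apply Rmult_le_pos; [exact hla | apply rpow_ge0]. Qed.

Lemma loss_integrand_ge0 u : 0 < u -> 0 <= loss_integrand p Psi y v t u.
Proof.
  intros hu; unfold loss_integrand, alpha.
  apply Rmult_le_pos; [apply Rmult_le_pos; [exact alpha0_ge0 |] | apply hy_nonneg; lra].
  apply Rplus_le_le_0_compat; apply rpow_ge0.
Qed.

Lemma continuous_half_gain_integrand u :
  0 < u < v -> continuous (half_gain_integrand p Psi y v t) u.
Proof.
  intros hu; unfold half_gain_integrand.
  apply continuous_Rmult; [apply continuous_Rmult; [apply continuous_Rmult |] |].
  - apply continuous_const.
  - apply continuous_rpow_l; lra.
  - apply hy_cont; lra.
  - apply (continuous_reflect (fun x => y x t)), hy_cont; lra.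
Qed.

Lemma ex_RInt_half_gain_integrand a b :
  0 < a <= b -> b < v -> ex_RInt (half_gain_integrand p Psi y v t) a b.
Proof.
  intros hab hbv; apply (ex_RInt_continuous (V := R_CompleteNormedModule)).
  intros u hu; rewrite Rmin_left, Rmax_right in hu by lra.
  apply continuous_half_gain_integrand; lra.
Qed.

Lemma ex_RInt_loss_integrand a b :
  0 < a <= b -> b < v -> ex_RInt (loss_integrand p Psi y v t) a b.
Proof.
  intros hab hbv; apply (ex_RInt_continuous (V := R_CompleteNormedModule)).
  intros u hu; rewrite Rmin_left, Rmax_right in hu by lra.
  apply continuous_Rmult; [| apply hy_cont; lra].
  apply continuous_Rmult; [apply continuous_const |].
  apply (continuous_plus (K := R_AbsRing) (V := R_NormedModule));
    [apply continuous_const | apply continuous_rpow_l; lra].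
Qed.

Lemma RInt_half_gain_le a b :
  0 < a <= b -> b < v ->
  ex_RInt_gen (loss_integrand p Psi y v t) (at_right 0) (Rbar_locally p_infty) ->
  RInt (half_gain_integrand p Psi y v t) a b <=
  y v t * RInt_gen (loss_integrand p Psi y v t) (at_right 0) (Rbar_locally p_infty).
Proof.
  intros hab hbv hL.
  set (L := loss_integrand p Psi y v t).
  assert (hexL := ex_RInt_loss_integrand a b hab hbv); fold L in hexL.
  assert (hM : 0 <= y v t) by (apply hy_nonneg; lra).
  apply Rle_trans with (RInt (fun u => y v t * L u) a b).
  - apply RInt_le; [lra | apply ex_RInt_half_gain_integrand; auto
                   | apply (ex_RInt_scal (V := R_NormedModule)), hexL |].
    intros u hu; unfold half_gain_integrand, L, loss_integrand, alpha.
    set (A0 := alpha0 p Psi t).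
    assert (hA0 : 0 <= A0) by exact alpha0_ge0.
    assert (y (v - u) t <= y v t) by (apply hy_max; lra).
    assert (0 <= y u t) by (apply hy_nonneg; lra).
    assert (0 <= A0 * rpow u (p_a p) * y u t)
      by (apply Rmult_le_pos; [apply Rmult_le_pos; [exact hA0 | apply rpow_ge0] | lra]).
    assert (0 <= y v t * (A0 * rpow v (p_a p) * y u t))
      by (apply Rmult_le_pos; [lra | apply Rmult_le_pos; [apply Rmult_le_pos |]];
          [exact hA0 | apply rpow_ge0 | lra]).
    apply Rle_trans with (A0 * rpow u (p_a p) * y u t * y v t);
      [apply Rmult_le_compat_l; lra | lra].
  - replace (RInt (fun u => y v t * L u) a b) with (y v t * RInt L a b)
      by (symmetry; apply (RInt_scal (V := R_CompleteNormedModule)), hexL).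
    apply Rmult_le_compat_l; [exact hM |].
    apply RInt_le_RInt_gen_pinfty; [lra | apply loss_integrand_ge0 | exact hL].
Qed.

(* By the symmetry u <-> v - u of the gain integrand, each of its two halves is at most
   y(v) times the loss integral. *)
Lemma gain_le_loss :
  ex_RInt_gen (loss_integrand p Psi y v t) (at_right 0) (Rbar_locally p_infty) ->
  ex_RInt_gen (gain_integrand p Psi y v t) (at_right 0) (at_left v) ->
  gain p Psi y v t <= loss p Psi y v t.
Proof.
  intros hL hG.
  set (H := half_gain_integrand p Psi y v t).
  set (IL := RInt_gen (loss_integrand p Psi y v t) (at_right 0) (Rbar_locally p_infty)).
  unfold gain, loss; fold IL.
  enough (RInt_gen (gain_integrand p Psi y v t) (at_right 0) (at_left v) <= 2 * (y v t * IL))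
    by lra.
  apply (is_RInt_gen_closed _ (fun z => z <= 2 * (y v t * IL)) _ (closed_le _)
           (RInt_gen_correct _ hG)).
  exists (fun a => 0 < a < v / 2) (fun b => v / 2 < b < v);
    [apply (at_right_of_interval 0 (v / 2)); [lra | auto]
    | apply (at_left_of_interval (v / 2) v); [lra | auto] |].
  intros a b ha hb z hz; simpl in hz.
  rewrite <- (is_RInt_unique _ _ _ _ hz).
  rewrite (RInt_ext _ (fun u => H u + H (v - u))) by (intros u _; apply gain_integrand_split).
  assert (hexH : ex_RInt H (v - b) (v - a)) by (apply ex_RInt_half_gain_integrand; lra).
  rewrite (RInt_plus (V := R_CompleteNormedModule));
    [| apply ex_RInt_half_gain_integrand; lra |].
  - rewrite RInt_reflect by (apply ex_RInt_swap, hexH); unfold plus; simpl.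
    assert (RInt H a b <= y v t * IL) by (apply RInt_half_gain_le; auto; lra).
    assert (RInt H (v - b) (v - a) <= y v t * IL) by (apply RInt_half_gain_le; auto; lra).
    lra.
  - apply (ex_RInt_continuous (V := R_CompleteNormedModule)); intros u hu.
    rewrite Rmin_left, Rmax_right in hu by lra.
    apply continuous_reflect, continuous_half_gain_integrand; lra.
Qed.

End CoagulationAtMaximum.

Definition continuous_within_nonneg (f : R -> R) (t : R) : Prop :=
  forall eps, 0 < eps -> exists del, 0 < del /\
    forall t', 0 <= t' -> Rabs (t' - t) < del -> Rabs (f t' - f t) < eps.

Lemma continuity_pt_Rmax0 (f : R -> R) t :
  0 <= t -> continuous_within_nonneg f t -> continuity_pt (fun s => f (Rmax 0 s)) t.
Proof.
  intros ht hf eps heps.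
  destruct (hf eps heps) as [del [hdel hf']].
  exists del; split; [exact hdel |]; intros s [_ hs]; simpl in *; unfold R_dist in *.
  rewrite (Rmax_right 0 t) by lra.
  apply hf'; [apply Rmax_l |].
  eapply Rle_lt_trans; [| exact hs].
  unfold Rmax; destruct (Rle_dec 0 s); [lra |].
  rewrite !Rabs_left1 by lra; lra.
Qed.

Lemma exists_tilted_max (f : R -> R) t1 eps :
  (forall t, 0 <= t -> continuous_within_nonneg f t) -> f 0 = 0 ->
  0 < t1 -> 0 < eps -> eps * t1 < f t1 ->
  exists ts, 0 < ts <= t1 /\ 0 < f ts /\
    forall s, 0 <= s <= t1 -> f s - eps * s <= f ts - eps * ts.
Proof.
  intros hf hf0 ht1 heps hft1.
  destruct (continuity_ab_maj (fun s => f (Rmax 0 s) - eps * s) 0 t1) as [ts [hmax hts]];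
    [lra | |].
  { intros c hc.
    apply (continuity_pt_minus (fun s => f (Rmax 0 s)) (fun s => eps * s)).
    - apply continuity_pt_Rmax0, hf; lra.
    - apply continuity_pt_filterlim, (continuous_mult (K := R_AbsRing));
        [apply continuous_const | apply continuous_id]. }
  assert (hmax' : forall s, 0 <= s <= t1 -> f s - eps * s <= f ts - eps * ts).
  { intros s hs; specialize (hmax s hs); simpl in hmax.
    rewrite !Rmax_right in hmax by lra; exact hmax. }
  assert (hts1 := hmax' t1 ltac:(lra)).
  assert (0 <= eps * ts) by (apply Rmult_le_pos; lra).
  exists ts; split; [| split; [lra | exact hmax']].
  split; [| lra].
  destruct (proj1 hts) as [h | h]; [exact h | rewrite <- h in hts1; rewrite hf0 in hts1; lra].
Qed.

Lemma cont_quadrant_off_continuous_size v0' (y : R -> R -> R) u t :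
  cont_quadrant_off v0' y -> 0 < u -> u <> v0' -> 0 <= t -> continuous (fun x => y x t) u.
Proof.
  intros hy hu hne ht; apply continuity_pt_filterlim; intros eps heps.
  destruct (hy u t ltac:(lra) ht hne (mkposreal eps heps)) as [del hdel].
  exists (Rmin del u); split; [apply Rmin_pos; [apply cond_pos | lra] |].
  intros x [_ hx]; simpl in *; unfold R_dist in *.
  assert (Rabs (x - u) < del) by (eapply Rlt_le_trans; [exact hx | apply Rmin_l]).
  assert (hxu : Rabs (x - u) < u) by (eapply Rlt_le_trans; [exact hx | apply Rmin_r]).
  apply Rabs_lt_between in hxu.
  apply hdel; [lra | lra | assumption |].
  rewrite Rminus_diag, Rabs_R0; apply cond_pos.
Qed.

Section RunningMax.

Variables (y : R -> R -> R) (v0' V : R).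
Hypotheses (hV : 0 <= V < v0') (hy : cont_quadrant_off v0' y).

Lemma exists_size_argmax t :
  0 <= t -> exists vm, 0 <= vm <= V /\ forall v, 0 <= v <= V -> y v t <= y vm t.
Proof.
  intros ht.
  destruct (continuity_ab_maj (fun v => y (Rmax 0 v) t) 0 V) as [vm [hmax hvm]]; [lra | |].
  - intros c hc; apply (continuity_pt_Rmax0 (fun x => y x t)); [lra |]; intros eps heps.
    destruct (hy c t ltac:(lra) ht ltac:(lra) (mkposreal eps heps)) as [del hdel].
    exists del; split; [apply cond_pos |]; intros v hv hvc.
    apply hdel; [exact hv | exact ht | exact hvc | rewrite Rminus_diag, Rabs_R0; apply cond_pos].
  - exists vm; split; [exact hvm |]; intros v hv.
    specialize (hmax v hv); simpl in hmax; rewrite !Rmax_right in hmax by lra; exact hmax.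
Qed.

Lemma size_uniform_continuity t :
  0 <= t -> forall eps, 0 < eps -> exists del, 0 < del /\
  forall t', 0 <= t' -> Rabs (t' - t) < del ->
  forall v, 0 <= v <= V -> Rabs (y v t' - y v t) < eps.
Proof.
  intros ht eps heps.
  assert (hloc : forall c, exists dl : posreal, 0 <= c <= V -> forall v' t', 0 <= v' -> 0 <= t' ->
     Rabs (v' - c) < dl -> Rabs (t' - t) < dl -> Rabs (y v' t' - y c t) < eps / 2).
  { intros c; destruct (Rle_dec 0 c) as [hc0 |]; [destruct (Rle_dec c V) |].
    - destruct (hy c t hc0 ht ltac:(lra) (mkposreal (eps / 2) ltac:(lra))) as [dl hdl].
      exists dl; intros _; exact hdl.
    - exists (mkposreal 1 Rlt_0_1); intros; lra.
    - exists (mkposreal 1 Rlt_0_1); intros; lra. }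
  destruct (choice _ hloc) as [delta hdelta].
  destruct (compactness_value_1d 0 V delta) as [d hd].
  exists d; split; [apply cond_pos |]; intros t' ht' htt' v hv.
  apply NNPP; intros hn; apply (hd v hv); intros [c [hc [hvc hdc]]]; apply hn.
  assert (h1 := hdelta c hc v t' ltac:(lra) ht' hvc ltac:(lra)).
  assert (h2 := hdelta c hc v t ltac:(lra) ht hvc
                  ltac:(rewrite Rminus_diag, Rabs_R0; apply cond_pos)).
  replace (y v t' - y v t) with ((y v t' - y c t) - (y v t - y c t)) by ring.
  eapply Rle_lt_trans; [apply Rabs_triang |]; rewrite Rabs_Ropp; lra.
Qed.

Lemma running_max :
  exists vmax : R -> R,
    (forall t, 0 <= t -> 0 <= vmax t <= V /\ forall v, 0 <= v <= V -> y v t <= y (vmax t) t) /\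
    forall t, 0 <= t -> continuous_within_nonneg (fun s => y (vmax s) s) t.
Proof.
  destruct (choice (fun t vm => 0 <= t -> 0 <= vm <= V /\
                      forall v, 0 <= v <= V -> y v t <= y vm t)) as [vmax hvmax].
  { intros t; destruct (Rle_dec 0 t) as [ht | ht].
    - destruct (exists_size_argmax t ht) as [vm hvm]; exists vm; auto.
    - exists 0; intros; lra. }
  exists vmax; split; [exact hvmax |].
  intros t ht eps heps.
  destruct (size_uniform_continuity t ht eps heps) as [del [hdel hU]].
  exists del; split; [exact hdel |]; intros t' ht' htt'.
  destruct (hvmax t ht) as [hv hmax], (hvmax t' ht') as [hv' hmax'].
  specialize (hmax (vmax t') hv'); specialize (hmax' (vmax t) hv).
  assert (h1 := hU t' ht' htt' (vmax t) hv); assert (h2 := hU t' ht' htt' (vmax t') hv').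
  apply Rabs_lt_between in h1; apply Rabs_lt_between in h2; apply Rabs_def1; lra.
Qed.

End RunningMax.

Definition subsolution_at p Psi (g y : R -> R -> R) (v t : R) : Prop :=
  ex_derive (fun s => y v s) t /\ ex_derive (fun u => g u t * y u t) v /\
  ex_RInt_gen (loss_integrand p Psi y v t) (at_right 0) (Rbar_locally p_infty) /\
  ex_RInt_gen (gain_integrand p Psi y v t) (at_right 0) (at_left v) /\
  Derive (fun s => y v s) t <=
    - Derive (fun u => g u t * y u t) v - loss p Psi y v t + gain p Psi y v t.

Section MaximumPrinciple.

Variables (p : LPMF_params) (Psi : R -> R) (g y : R -> R -> R) (V : R).
Hypotheses (hla : 0 <= lam_a p) (hV : 0 < V < v0 p)
  (hg : forall t, 0 < t -> forall u v, 0 <= u <= v -> 0 <= g u t <= g v t)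
  (hy_nonneg : forall v t, 0 <= v -> 0 <= t -> 0 <= y v t)
  (hy_cont : cont_quadrant_off (v0 p) y)
  (hy_init : forall v, 0 <= v -> y v 0 = 0)
  (hy_bdry : forall t, 0 <= t -> y 0 t = 0)
  (hy_sub : forall v t, 0 < v <= V -> 0 < t -> subsolution_at p Psi g y v t).

Lemma rhs_nonpos_at_size_max v t :
  0 < v <= V -> 0 < t -> (forall u, 0 <= u <= v -> y u t <= y v t) ->
  - Derive (fun u => g u t * y u t) v - loss p Psi y v t + gain p Psi y v t <= 0.
Proof.
  intros hv ht hmax.
  destruct (hy_sub v t hv ht) as (_ & hflux & hL & hG & _).
  assert (0 <= Derive (fun u => g u t * y u t) v).
  { apply (is_derive_nonneg_of_left_max (fun u => g u t * y u t) v v);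
      [lra | apply Derive_correct, hflux |].
    intros s hs; destruct (hg t ht s v ltac:(lra)).
    apply Rmult_le_compat; auto; [apply hy_nonneg | apply hmax]; lra. }
  assert (gain p Psi y v t <= loss p Psi y v t).
  { apply gain_le_loss; auto; [lra | intros u hu; apply hy_nonneg; lra |].
    intros u hu; apply (cont_quadrant_off_continuous_size (v0 p)); auto; lra. }
  lra.
Qed.

Lemma maximum_principle v t : 0 <= v <= V -> 0 <= t -> y v t = 0.
Proof.
  destruct (running_max y (v0 p) V ltac:(lra) hy_cont) as [vmax [hvmax hM_cont]].
  set (M := fun t => y (vmax t) t).
  enough (hM : forall t, 0 <= t -> M t <= 0).
  { intros hv ht; destruct (hvmax t ht) as [_ hle].
    specialize (hle v hv); specialize (hM t ht).
    assert (hy := hy_nonneg v t ltac:(lra) ht); unfold M in hM; lra. }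
  intros t1 ht1; apply Rnot_lt_le; intros hpos.
  assert (hM0 : M 0 = 0) by (apply hy_init, (hvmax 0 (Rle_refl 0))).
  assert (ht1' : 0 < t1) by (destruct ht1 as [h | h]; [exact h | rewrite <- h in hpos; lra]).
  set (eps := M t1 / (2 * t1)).
  assert (heps : 0 < eps) by (apply Rdiv_lt_0_compat; lra).
  destruct (exists_tilted_max M t1 eps hM_cont hM0 ht1' heps) as [ts [hts [hMts htilt]]].
  { unfold eps; field_simplify; lra. }
  set (vs := vmax ts).
  destruct (hvmax ts ltac:(lra)) as [hvs hvs_max]; fold vs in hvs, hvs_max.
  assert (hvs0 : 0 < vs).
  { destruct (proj1 hvs) as [h | h]; [exact h |].
    unfold M in hMts; fold vs in hMts; rewrite <- h, hy_bdry in hMts; lra. }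
  destruct (hy_sub vs ts ltac:(lra) (proj1 hts)) as (hdt & _ & _ & _ & hineq).
  assert (eps <= Derive (fun s => y vs s) ts).
  { enough (0 <= Derive (fun s => y vs s) ts - eps) by lra.
    apply (is_derive_nonneg_of_left_max (fun s => y vs s - eps * s) ts ts); [lra | |].
    - apply (is_derive_minus (fun s => y vs s) (fun s => eps * s));
        [apply Derive_correct, hdt | auto_derive; [exact I | ring]].
    - intros s hs; specialize (htilt s ltac:(lra)).
      destruct (hvmax s ltac:(lra)) as [_ hle]; specialize (hle vs hvs).
      unfold M in htilt; fold vs in htilt; lra. }
  assert (hrhs := rhs_nonpos_at_size_max vs ts ltac:(lra) (proj1 hts)
                   ltac:(intros; apply hvs_max; lra)).
  lra.
Qed.

End MaximumPrinciple.

Lemma LPMF_m_subsolution p m w Vmat Vcm Vcw Psi Vpol2 :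
  params_ok p -> LPMF_solution p m w Vmat Vcm Vcw Psi Vpol2 ->
  forall v t, 0 < v < v0 p -> 0 < t ->
  subsolution_at p Psi (growth p Vmat Vcm Vcw Psi) m v t.
Proof.
  intros (_ & _ & _ & hlm & _) (hnn & _ & _ & _ & _ & hpde & _) v t hv ht.
  destruct (hpde v t ltac:(lra) ht ltac:(lra))
    as (hdt & _ & hdv & _ & hL & _ & hG & _ & hdm & _).
  repeat split; auto; rewrite hdm; unfold flux.
  assert (0 <= mu p * m v t) by (apply Rmult_le_pos; [unfold mu; lra | apply hnn; lra]).
  lra.
Qed.

Lemma LPMF_w_subsolution p m w Vmat Vcm Vcw Psi Vpol2 :
  LPMF_solution p m w Vmat Vcm Vcw Psi Vpol2 ->
  forall v t, 0 < v < v0 p -> 0 < t -> m v t = 0 ->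
  subsolution_at p Psi (growth p Vmat Vcm Vcw Psi) w v t.
Proof.
  intros (_ & _ & _ & _ & _ & hpde & _) v t hv ht hm.
  destruct (hpde v t ltac:(lra) ht ltac:(lra))
    as (_ & hdt & _ & hdv & _ & hL & _ & hG & _ & hdw).
  repeat split; auto; rewrite hdw, hm; unfold flux; lra.
Qed.

Theorem propositionB1 (p : LPMF_params) (hp : params_ok p)
    (hb : 0 < p_b p < 1)
    (m w : R -> R -> R) (Vmat Vcm Vcw Psi Vpol2 : R -> R)
    (hsol : LPMF_solution p m w Vmat Vcm Vcw Psi Vpol2) :
  forall v t, 0 <= v < v0 p -> 0 <= t -> m v t = 0 /\ w v t = 0.
Proof.
  assert (hg := LPMF_growth_monotone p m w Vmat Vcm Vcw Psi Vpol2 hp (proj1 hb) hsol).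
  assert (hla : 0 <= lam_a p) by (destruct hp; lra).
  pose proof hsol as (hnn & hcm & hcw & hinit & hbdry & _).
  intros v t hv ht.
  set (V := (v + v0 p) / 2).
  assert (hV : 0 < V < v0 p) by (unfold V; lra).
  assert (hm : forall v t, 0 <= v <= V -> 0 <= t -> m v t = 0).
  { apply (maximum_principle p Psi (growth p Vmat Vcm Vcw Psi)); auto;
      [intros; apply hnn | intros; apply hinit | intros; apply hbdry |]; auto.
    intros v' t' hv' ht'; apply (LPMF_m_subsolution p m w Vmat Vcm Vcw Psi Vpol2); auto; lra. }
  assert (hw : forall v t, 0 <= v <= V -> 0 <= t -> w v t = 0).
  { apply (maximum_principle p Psi (growth p Vmat Vcm Vcw Psi)); auto;
      [intros; apply hnn | intros; apply hinit | intros; apply hbdry |]; auto.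
    intros v' t' hv' ht'; apply (LPMF_w_subsolution p m w Vmat Vcm Vcw Psi Vpol2); auto; [lra |].
    apply hm; lra. }
  split; [apply hm | apply hw]; unfold V; lra.
Qed.
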